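(* For every graph $G$ on $[n]$, the ideal $I^{(2)}_G$ is contained in $I_G$. Moreover, suppose $I^{(2)}_G$ is prime, $I^{(2)}_G\cap\mathbb C[x]=\{0\}$ and $I^{(2)}_G\cap\mathbb C[s]=K_G$. Then $I^{(2)}_G=I_G$.
   Context: Setup. $G\subseteq\binom{[n]}{2}$ is a simple graph, and $G_i$ is the set of neighbours of $i$. We work in the polynomial ring $\mathbb C[s,x]$ with variables $s_{ij}$ ($ij\in G$) and $x_1,\dots,x_n$. $K_G$ denotes the ideal generated by the linear forms $\sum_{j\in G_i}s_{ij}$ for $i\in[n]$ (considered in $\mathbb C[s]$ or in $\mathbb C[s,x]$ as appropriate). $L_G=\sum_{ij\in G}s_{ij}\log(x_i-x_j)$, so $\partial L_G/\partial x_i=\sum_{j\in G_i}s_{ij}/(x_i-x_j)$. The ideals $I^{(0)}_G$ and $I_G$. $I^{(0)}_G$ is generated by $K_G$ and by $\prod_{j\in G_i}(x_i-x_j)\cdot\partial L_G/\partial x_i$ for $i\in[n]$. Then $$I_G=\{f\in\mathbb C[s,x]: abf\in I^{(0)}_G\ \text{for some nonzero } a\in\mathbb C[x]\ \text{and some } b\in\mathbb C[s]\setminus K_G\}.$$ The ideal $I^{(1)}_G$. It is generated by $I^{(0)}_G$ and by $\theta_k=\sum_{ij\in G}s_{ij}\sum_{\ell=0}^k x_i^{k-\ell}x_j^\ell$ for $k=2,\dots,n-2$. Separators and the ideal $I^{(2)}_G$. A subset $T\subset[n]$ is a separator of $G$ if the induced subgraph of $G$ on $[n]\setminus T$ has more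 connected components than $G$. For a separator $T$ and a connected component $C$ of $G\setminus T$, define $f_i(x)=\prod_{t\in T}(x_i-x_t)$ if $i\in C$ and $f_i=0$ otherwise. The expression $\sum_{i=1}^n f_i\,\partial L_G/\partial x_i$ is then a polynomial in $\mathbb C[s,x]$ (a separator-based derivation polynomial). $I^{(2)}_G$ is the ideal generated by $I^{(1)}_G$ together with all separator-based derivation polynomials, over all pairs $(T,C)$. *)

From HB Require Import structures.
From mathcomp Require Import all_boot all_order all_algebra.
From mathcomp Require Import reals.
From mathcomp Require Import complex.
From mathcomp Require Import fraction mpoly.

Unset Printing Implicit Defensive.

Import Order.TTheory GRing.Theory Num.Theory.
Local Open Scope ring_scope.

Definition simple_graph (n : nat) (G : {set {set 'I_n}}) : Prop :=
  forall e, e \in G -> #|e| = 2%N.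

Section Ring.
Variables (R : realType) (n : nat) (G : {set {set 'I_n}}).

Definition CC := R[i].

(* the edges of G, and the variables: s_e for e in G, then x_1..x_n *)
Definition edge := {e : {set 'I_n} | e \in G}.
Definition var := (edge + 'I_n)%type.
Definition nv := #|{: var}|.

Definition PR := {mpoly CC[nv]}.
Definition FR := {fraction PR}.
Definition tofr (p : PR) : FR := @FracField.tofrac PR p.
Local Notation "x %:F" := (tofr x).

Definition xv (i : 'I_n) : PR := 'X_(enum_rank (inr i : var)).
Definition sv (e : edge) : PR := 'X_(enum_rank (inl e : var)).
(* s_{ij}, for ij in G (0 otherwise; only used for ij in G) *)
Definition s (i j : 'I_n) : PR :=
  if insub [set i; j] is Some e then sv e else 0.

Definition nbhd (i : 'I_n) : {set 'I_n} := [set j | [set i; j] \in G].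

Definition inX (f : PR) : Prop :=
  forall m, m \in msupp f -> forall e : edge, m (enum_rank (inl e : var)) = 0%N.
Definition inS (f : PR) : Prop :=
  forall m, m \in msupp f -> forall i : 'I_n, m (enum_rank (inr i : var)) = 0%N.

Definition ideal_gen_in (A S : PR -> Prop) (f : PR) : Prop :=
  exists l : seq (PR * PR),
    (forall q, q \in l -> A q.1 /\ S q.2) /\ f = \sum_(q <- l) q.1 * q.2.
Definition ideal_gen (S : PR -> Prop) : PR -> Prop :=
  ideal_gen_in (fun _ => True) S.

Definition prime_ideal (I : PR -> Prop) : Prop :=
  ~ I 1 /\ forall a b, I (a * b) -> I a \/ I b.

Definition linform (i : 'I_n) : PR := \sum_(j in nbhd i) s i j.
Definition is_linform (f : PR) : Prop := exists i, f = linform i.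

Definition KG : PR -> Prop := ideal_gen is_linform.
Definition KGs : PR -> Prop := ideal_gen_in inS is_linform.

Definition dL (i : 'I_n) : FR :=
  \sum_(j in nbhd i) (s i j)%:F / (xv i - xv j)%:F.

Definition is_clearedL (f : PR) : Prop :=
  exists i, f%:F = (\prod_(j in nbhd i) (xv i - xv j))%:F * dL i.

Definition I0 : PR -> Prop :=
  ideal_gen (fun f => is_linform f \/ is_clearedL f).

Definition theta (k : nat) : PR :=
  \sum_(i < n) \sum_(j < n | (i < j)%N && ([set i; j] \in G))
     s i j * \sum_(l < k.+1) xv i ^+ (k - l) * xv j ^+ l.

Definition I1 : PR -> Prop :=
  ideal_gen (fun f => I0 f \/ exists k, (2 <= k <= n - 2)%N /\ f = theta k).

Definition adj (U : {set 'I_n}) : rel 'I_n :=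
  fun i j => [&& i \in U, j \in U & [set i; j] \in G].
Definition ncomp (U : {set 'I_n}) : nat := n_comp (adj U) U.

Definition separator (T : {set 'I_n}) : Prop :=
  (ncomp setT < ncomp (~: T))%N.

Definition component (T C : {set 'I_n}) : Prop :=
  exists2 i, i \in ~: T & C = [set j | connect (adj (~: T)) i j].

Definition sepf (T C : {set 'I_n}) (i : 'I_n) : PR :=
  if i \in C then \prod_(t in T) (xv i - xv t) else 0.

Definition is_sep_poly (f : PR) : Prop :=
  exists T C, separator T /\ component T C /\
    f%:F = \sum_(i < n) (sepf T C i)%:F * dL i.

Definition I2 : PR -> Prop := ideal_gen (fun f => I1 f \/ is_sep_poly f).

Definition IG (f : PR) : Prop :=
  exists a b, [/\ inX a, a != 0, inS b, ~ KGs b & I0 (a * b * f)].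

End Ring.

From Pilot Require Import Defs.
From HB Require Import structures.
From mathcomp Require Import all_boot all_order all_algebra.
From mathcomp Require Import reals complex fraction mpoly.
From mathcomp Require Import ring.
Local Open Scope ring_scope.
Import GRing.Theory.
Set Implicit Arguments.
Unset Strict Implicit.

(* Every generator g of I2 is, in the fraction field, a polynomial combination
   sum_i c_i dL_G/dx_i: for theta_k take c_i = x_i^(k+1) and pair the terms of
   each edge, for the separator polynomials this is their definition, and the
   generators of I0 are already in I0.  Multiplying by the product of all the
   differences x_i - x_j (ij in G) clears the denominators and lands in I0, so
   I2 is inside I_G with a = that product and b = 1.  Conversely, if abf is in
   I0, hence in the prime ideal I2, then a in I2 /\ C[x] = 0 and b in
   I2 /\ C[s] = K_G are excluded, so f is in I2. *)

Lemma subr_mpolyX_neq0 (R : nzRingType) k (i j : 'I_k) :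
  i != j -> 'X_i - 'X_j != 0 :> {mpoly R[k]}.
Proof.
move=> neq_ij; rewrite subr_eq0; apply/eqP => /(congr1 (mcoeff U_(i))).
by rewrite !mcoeffXU eqxx eq_sym (negbTE neq_ij) => /eqP; rewrite oner_eq0.
Qed.

Lemma mulr_prod_sum_frac (F : fieldType) (I : finType) (P : pred I)
    (num den : I -> F) :
  (forall j, P j -> den j != 0) ->
  (\prod_(j | P j) den j) * \sum_(j | P j) num j / den j =
  \sum_(j | P j) num j * \prod_(k | P k && (k != j)) den k.
Proof.
move=> den_neq0; rewrite mulr_sumr; apply: eq_bigr => j Pj.
by rewrite (bigD1 j Pj) /=; field; apply: den_neq0.
Qed.

Lemma sum_powS_frac (F : fieldType) (a b c : F) k :
  a != b ->
  a ^+ k.+1 * (c / (a - b)) + b ^+ k.+1 * (c / (b - a)) =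
  c * \sum_(l < k.+1) a ^+ (k - l) * b ^+ l.
Proof.
rewrite -subr_eq0 => ab_neq0.
have -> : b - a = - (a - b) by rewrite opprB.
rewrite invrN !mulrN !(mulrCA _ c) -mulrBr; congr (_ * _).
by rewrite -mulrBl subrXX /= mulrC mulKf.
Qed.

Lemma sum_sym_rel_pairs (V : nmodType) k (r : rel 'I_k) (t : 'I_k -> 'I_k -> V) :
  (forall i j, r i j = r j i) -> irreflexive r ->
  \sum_i \sum_(j | r i j) t i j =
  \sum_(i : 'I_k) \sum_(j : 'I_k | (i < j)%N && r i j) (t i j + t j i).
Proof.
move=> r_sym r_irr.
under eq_bigr => i _ do rewrite (bigID (fun j : 'I_k => (i < j)%N)) /=.
rewrite big_split /=; under [RHS]eq_bigr do rewrite big_split /=.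
rewrite [RHS]big_split /=; congr (_ + _).
  by apply: eq_bigr => i _; apply: eq_bigl => j; rewrite andbC.
under eq_bigr do rewrite big_mkcond /=.
rewrite exchange_big /=; apply: eq_bigr => i _; rewrite [RHS]big_mkcond /=.
apply: eq_bigr => j _; rewrite r_sym.
case: (ltngtP i j) => [lt_ij|lt_ji|/val_inj ->]; rewrite ?andbT ?andbF //.
by rewrite r_irr.
Qed.

Section Ideals.
Variables (R : realType) (n : nat) (G : {set {set 'I_n}}).

Local Notation PR := (PR R n G).
Local Notation ideal_gen_in := (ideal_gen_in R n G).
Local Notation ideal_gen := (ideal_gen R n G).

Lemma ideal_gen_in_sum (A S : PR -> Prop) (I : Type) (r : seq I) (P : pred I)
    (F : I -> PR) :
  (forall i, P i -> ideal_gen_in A S (F i)) ->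
  ideal_gen_in A S (\sum_(i <- r | P i) F i).
Proof.
move=> IF; apply: big_ind => //; first by exists [::]; rewrite big_nil.
move=> _ _ [l1 [A1 ->]] [l2 [A2 ->]]; exists (l1 ++ l2); rewrite big_cat.
by split=> // q; rewrite mem_cat => /orP[/A1|/A2].
Qed.

Lemma ideal_genM (S : PR -> Prop) a f : ideal_gen S f -> ideal_gen S (a * f).
Proof.
case=> l [lS ->]; exists [seq (a * q.1, q.2) | q <- l]; split.
  by move=> _ /mapP[q /lS[_ Sq] ->].
by rewrite big_map mulr_sumr; apply: eq_bigr => q _; rewrite mulrA.
Qed.

Lemma ideal_gen_gen (S : PR -> Prop) g : S g -> ideal_gen S g.
Proof.
move=> Sg; exists [:: (1, g)]; rewrite big_seq1 mul1r.
by split=> // q; rewrite inE => /eqP ->.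
Qed.

Lemma ideal_gen_mull_sub (S S' : PR -> Prop) a f :
  (forall g, S g -> ideal_gen S' (a * g)) ->
  ideal_gen S f -> ideal_gen S' (a * f).
Proof.
move=> aS [l [lS ->]]; rewrite mulr_sumr big_seq.
apply: ideal_gen_in_sum => q /lS[_ Sq]; rewrite mulrCA.
exact/ideal_genM/aS.
Qed.
End Ideals.

Section Theorem11.
Variables (R : realType) (n : nat) (G : {set {set 'I_n}}).
Hypothesis simpleG : simple_graph n G.

Local Notation PR := (PR R n G).
Local Notation xv := (xv R n G).
Local Notation s := (s R n G).
Local Notation nbhd := (nbhd n G).
Local Notation dL := (dL R n G).
Local Notation tofr := (tofr R n G).
Local Notation inX := (inX R n G).
Local Notation inS := (inS R n G).
Local Notation I0 := (I0 R n G).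
Local Notation I2 := (I2 R n G).

HB.instance Definition _ := GRing.RMorphism.copy tofr (@FracField.tofrac PR).

Lemma tofr_inj : injective tofr.
Proof. by move=> p q /eqP; rewrite tofrac_eq => /eqP. Qed.

Lemma s_sym i j : s i j = s j i.
Proof. by rewrite /Defs.s setUC. Qed.

Lemma nbhd_neq i j : j \in nbhd i -> i != j.
Proof. by rewrite inE => /simpleG; rewrite cards2; case: (i != j). Qed.

Lemma xv_sub_neq0 i j : i != j -> xv i - xv j != 0.
Proof.
move=> neq_ij; apply: subr_mpolyX_neq0.
by rewrite (inj_eq enum_rank_inj) (inj_eq (@inr_inj _ _)).
Qed.

Lemma tofr_xv_sub_neq0 i j : i != j -> tofr (xv i) - tofr (xv j) != 0.
Proof. by move=> neq_ij; rewrite -rmorphB tofrac_eq0 xv_sub_neq0. Qed.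

Definition denom i : PR := \prod_(j in nbhd i) (xv i - xv j).
Definition denom_prod : PR := \prod_i denom i.

Definition cleared i : PR :=
  \sum_(j in nbhd i) s i j * \prod_(k in nbhd i | k != j) (xv i - xv k).

Definition derivation_poly (f : PR) : Prop :=
  exists c : 'I_n -> PR, tofr f = \sum_i tofr (c i) * dL i.

Lemma tofr_cleared i : tofr (cleared i) = tofr (denom i) * dL i.
Proof.
rewrite /cleared /denom /Defs.dL rmorph_prod mulr_prod_sum_frac.
  rewrite rmorph_sum; apply: eq_bigr => j _.
  by rewrite rmorphM rmorph_prod; under eq_bigr do rewrite rmorphB.
by move=> j /nbhd_neq; rewrite rmorphB; apply: tofr_xv_sub_neq0.
Qed.

Lemma derivation_poly_I0 f : derivation_poly f -> I0 (denom_prod * f).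
Proof.
case=> c Ef.
have -> : denom_prod * f = \sum_i (c i * \prod_(k | k != i) denom k) * cleared i.
  apply: tofr_inj; rewrite rmorphM /= Ef rmorph_sum mulr_sumr.
  apply: eq_bigr => i _; rewrite !rmorphM /= tofr_cleared /denom_prod (bigD1 i) //.
  by rewrite rmorphM /=; ring.
apply: ideal_gen_in_sum => i _; apply: ideal_genM.
by apply: ideal_gen_gen; right; exists i; apply: tofr_cleared.
Qed.

Lemma theta_derivation_poly k : derivation_poly (theta R n G k).
Proof.
exists (fun i => xv i ^+ k.+1).
pose X i := tofr (xv i).
pose t i j := X i ^+ k.+1 * (tofr (s i j) / (X i - X j)).
have -> : \sum_i tofr (xv i ^+ k.+1) * dL i =
          \sum_i \sum_(j | [set i; j] \in G) t i j.
  apply: eq_bigr => i _; rewrite /Defs.dL mulr_sumr rmorphXn.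
  by apply: eq_big => [j|j _]; rewrite ?inE // /t /X rmorphB.
rewrite sum_sym_rel_pairs; first last.
- by move=> i; apply/negP => /simpleG; rewrite setUid cards1.
- by move=> i j; rewrite setUC.
rewrite rmorph_sum; apply: eq_bigr => i _; rewrite rmorph_sum.
apply: eq_bigr => j /andP[lt_ij _]; rewrite /t (s_sym j i).
have neq_ij : i != j by apply: contraTneq lt_ij => ->; rewrite ltnn.
rewrite sum_powS_frac; last by rewrite -subr_eq0 tofr_xv_sub_neq0.
rewrite rmorphM rmorph_sum /=.
by congr (_ * _); apply: eq_bigr => l _; rewrite rmorphM !rmorphXn.
Qed.

Lemma I2_mul_denom_prod_I0 f : I2 f -> I0 (denom_prod * f).
Proof.
apply: ideal_gen_mull_sub => g [I1g | [T [C [_ [_ Eg]]]]].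
  move: I1g; apply: ideal_gen_mull_sub => h [I0h | [k [_ ->]]].
    exact: ideal_genM.
  exact/derivation_poly_I0/theta_derivation_poly.
by apply: derivation_poly_I0; exists (sepf R n G T C).
Qed.

Lemma inX1 : inX 1.
Proof. by move=> m; rewrite msupp1 inE => /eqP -> e; rewrite mnm0E. Qed.

Lemma inXM p q : inX p -> inX q -> inX (p * q).
Proof.
move=> Xp Xq m /msuppM_le /allpairsP[[m1 m2] [/= m1p m2q ->]] e.
by rewrite mnmDE (Xp _ m1p) (Xq _ m2q).
Qed.

Lemma inXB p q : inX p -> inX q -> inX (p - q).
Proof. by move=> Xp Xq m /msuppB_le; rewrite mem_cat => /orP[/Xp|/Xq]. Qed.

Lemma inX_xv i : inX (xv i).
Proof.
move=> m; rewrite msuppX inE => /eqP -> e; rewrite mnm1E.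
by rewrite (inj_eq enum_rank_inj).
Qed.

Lemma inX_denom_prod : inX denom_prod.
Proof.
apply: big_ind => [|p q|i _]; [exact: inX1 | exact: inXM |].
apply: big_ind => [|p q|j _]; [exact: inX1 | exact: inXM |].
exact/inXB/inX_xv/inX_xv.
Qed.

Lemma denom_prod_neq0 : denom_prod != 0.
Proof.
apply/prodf_neq0 => i _; apply/prodf_neq0 => j /nbhd_neq.
exact: xv_sub_neq0.
Qed.

Lemma inS1 : inS 1.
Proof. by move=> m; rewrite msupp1 inE => /eqP -> i; rewrite mnm0E. Qed.

(* Evaluating at 0 kills every linear form, hence all of K_G, but not 1. *)
Lemma not_KGs1 : ~ KGs R n G 1.
Proof.
case=> l [lS /(congr1 (meval (fun _ => 0 : CC R)))].
rewrite meval1 raddf_sum big_seq big1 => [/eqP|q /lS[_ [i ->]]].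
  by rewrite oner_eq0.
apply: (etrans (mevalM _ _ _)); rewrite /linform raddf_sum big1 ?mulr0 // => j _.
rewrite /Defs.s; case: insub => [e|]; [exact: (etrans (mevalXU _ _)) | exact: meval0].
Qed.

Lemma I2_sub_IG f : I2 f -> IG R n G f.
Proof.
move=> I2f; exists denom_prod, 1; split.
- exact: inX_denom_prod.
- exact: denom_prod_neq0.
- exact: inS1.
- exact: not_KGs1.
- by rewrite mulr1; apply: I2_mul_denom_prod_I0.
Qed.

Lemma IG_sub_I2 f :
  prime_ideal R n G I2 ->
  (forall g, inX g -> I2 g -> g = 0) ->
  (forall g, inS g -> (I2 g <-> KGs R n G g)) ->
  IG R n G f -> I2 f.
Proof.
move=> [_ I2_prime] I2X I2S [a [b [Xa a_neq0 Sb b_notK I0abf]]].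
have I2abf : I2 (a * b * f) by do 2![apply: ideal_gen_gen; left].
case: (I2_prime _ _ I2abf) => [/I2_prime[I2a | I2b] | //].
  by move: a_neq0; rewrite (I2X _ Xa I2a) eqxx.
by case: b_notK; apply/(I2S _ Sb).
Qed.

End Theorem11.

Theorem mainTheorem11 (R : realType) (n : nat) (G : {set {set 'I_n}}) :
  simple_graph n G ->
  (forall f, I2 R n G f -> IG R n G f) /\
  (prime_ideal R n G (I2 R n G) ->
   (forall f, inX R n G f -> I2 R n G f -> f = 0) ->
   (forall f, inS R n G f -> (I2 R n G f <-> KGs R n G f)) ->
   forall f, I2 R n G f <-> IG R n G f).
Proof.
move=> simpleG; split=> [f | I2_prime I2X I2S f]; first exact: I2_sub_IG.
by split; [apply: I2_sub_IG | apply: IG_sub_I2].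
Qed.
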